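(* Let $\mathcal{C}$ be a $d$-uniform properly-connected hypergraph on $V$ and $F$ an edge of $\mathcal{C}$. Then: (i) an edge $C$ of $\mathcal{C}$ is an edge of $\mathcal{C}:F$ if and only if $\operatorname{dist}_{\mathcal{C}}(F,C)\ge d+1$; (ii) $\mathcal{C}:F=\mathcal{C}_{V\setminus(F\cup N_{\mathcal{C}}(F))}$; (iii) the edge set of $\mathcal{C}:F$ equals $\mathcal{C}^{\ge}=\{G\in\mathcal{C}: \operatorname{dist}_{\mathcal{C}}(F,G)\ge d+1\}$; (iv) $\operatorname{c}_{\mathcal{C}}\ge \operatorname{c}_{\mathcal{C}:F}+1$, where $\operatorname{c}_{\mathcal{D}}$ denotes the maximum number of pairwise $(d+1)$-disjoint edges of $\mathcal{D}$.
   Context: A hypergraph $\mathcal{C}$ on a finite vertex set $V$ is a family of pairwise incomparable subsets of $V$ (its edges), each of cardinality at least $2$; it is $d$-uniform if every edge has $d$ elements. For an edge $F$: $N_{\mathcal{C}}(F)=\bigcup\{E\setminus F : E\in\mathcal{C},\ |E\setminus F|=1\}$, and $\mathcal{C}:F$ is the hypergraph on $V\setminus(F\cup N_{\mathcal{C}}(F))$ whose edges are the members of cardinality at least $2$ among the inclusion-minimal members of $\{E\setminus F: E\in\mathcal{C},E\neq F\}$. For $A\subseteq V$, $\mathcal{C}_A=\{E\in\mathcal{C}: E\subseteq A\}$ is the induced subhypergraph on $A$. Given edges $F,G$ with $|F|\ge |G|$, a proper chain from $F$ to $G$ is a sequence $(E_0=F,x_1,E_1,x_2,\dots,x_n,E_n=G)$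 with distinct vertices $x_i$ and distinct edges $E_j$ such that $x_1\in E_0$, $x_n\in E_n$, $x_k,x_{k+1}\in E_k$ for $k=1,\dots,n-1$, and $|E_i\cap E_{i+1}|=|E_{i+1}|-1$ for $i=0,\dots,n-1$; its length is $n$. It is irredundant if no subsequence of it is a proper chain from $F$ to $G$. The distance $\operatorname{dist}_{\mathcal{C}}(F,G)$ is the minimum length of a proper irredundant chain from $F$ to $G$ ($\infty$ if none). A $d$-uniform hypergraph is properly-connected if $\operatorname{dist}_{\mathcal{C}}(F,G)=d-|F\cap G|$ for any two edges with $F\cap G\neq\emptyset$. A set of edges is pairwise $t$-disjoint if any two of its distinct members have distance at least $t$ (distances in (iv) for $\mathcal{C}:F$ are taken in $\mathcal{C}:F$). *)

From mathcomp Require Import all_boot.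
From mathcomp Require Import boolp.

Set Implicit Arguments.
Unset Strict Implicit.
Unset Printing Implicit Defensive.

Section Hypergraphs.
Variable V : finType.

Definition hypergraph (C : {set {set V}}) : Prop :=
  (forall E, E \in C -> 2 <= #|E|) /\
  (forall E E', E \in C -> E' \in C -> E \subset E' -> E = E').

Definition uniform (d : nat) (C : {set {set V}}) : Prop :=
  forall E, E \in C -> #|E| = d.

Definition nbh (C : {set {set V}}) (F : {set V}) : {set V} :=
  \bigcup_(E in C | #|E :\: F| == 1) (E :\: F).

Definition colon_vs (C : {set {set V}}) (F : {set V}) : {set V} :=
  ~: (F :|: nbh C F).

Definition colon_fam (C : {set {set V}}) (F : {set V}) : {set {set V}} :=
  [set E :\: F | E in C & E != F].

Definition colon (C : {set {set V}}) (F : {set V}) : {set {set V}} :=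
  [set D in colon_fam C F |
     [forall D' in colon_fam C F, (D' \subset D) ==> (D' == D)] && (2 <= #|D|)].

Definition induced (C : {set {set V}}) (A : {set V}) : {set {set V}} :=
  [set E in C | E \subset A].

(* A chain (E_0 = F, x_1, E_1, ..., x_n, E_n) is encoded by its start F and
   the list of steps [(x_1,E_1); ...; (x_n,E_n)]. *)
Definition chain_edges (F : {set V}) (ps : seq (V * {set V})) : seq {set V} :=
  F :: map snd ps.

Definition chain_seq (F : {set V}) (ps : seq (V * {set V}))
  : seq (V + {set V}) :=
  inr F :: flatten (map (fun p => [:: inl p.1; inr p.2]) ps).

Definition proper_chain (C : {set {set V}}) (F G : {set V})
  (ps : seq (V * {set V})) : bool :=
  [&& #|G| <= #|F|,
      all (fun E => E \in C) (chain_edges F ps),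
      last F (map snd ps) == G,
      uniq (map fst ps),
      uniq (chain_edges F ps) &
      all (fun q : {set V} * (V * {set V}) =>
             [&& q.2.1 \in q.1, q.2.1 \in q.2.2 &
                 #|q.1 :&: q.2.2| == #|q.2.2| - 1])
          (zip (chain_edges F ps) ps)].

Definition irredundant (C : {set {set V}}) (F G : {set V})
  (ps : seq (V * {set V})) : Prop :=
  forall ps', subseq (chain_seq F ps') (chain_seq F ps) ->
    proper_chain C F G ps' -> ps' = ps.

Definition has_chain_of_length (C : {set {set V}}) (F G : {set V}) (n : nat)
  : bool :=
  `[< exists ps, [/\ proper_chain C F G ps, irredundant C F G ps &
                     size ps = n] >].

(* distance: Some n = minimal length, None = infinity *)
Definition dist (C : {set {set V}}) (F G : {set V}) : option nat :=
  match pselect (exists n, has_chain_of_length C F G n) with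
  | left h => Some (ex_minn h)
  | right _ => None
  end.

Definition dist_ge (x : option nat) (t : nat) : bool :=
  if x is Some k then t <= k else true.

Definition properly_connected (d : nat) (C : {set {set V}}) : Prop :=
  forall F G, F \in C -> G \in C -> F :&: G != set0 ->
    dist C F G = Some (d - #|F :&: G|).

Definition pairwise_tdisjoint (D : {set {set V}}) (t : nat)
  (S : {set {set V}}) : bool :=
  [forall G in S, forall H in S, (G != H) ==> dist_ge (dist D G H) t].

Definition cnum (d : nat) (D : {set {set V}}) : nat :=
  \max_(S : {set {set V}} | (S \subset D) && pairwise_tdisjoint D d.+1 S) #|S|.

End Hypergraphs.

(* In a d-uniform hypergraph consecutive edges of a proper chain share d - 1
   vertices, so along a chain the intersection with any fixed set changes by
   at most one per step.  Hence a chain of length at most d - |F :&: E| from F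
   to E first enters an edge E1 with E1 :\: F a single vertex of N_C(F), and
   E1 still meets E outside F; conversely, proper connectivity yields a chain
   of length exactly d from F to any edge disjoint from F through a vertex of
   N_C(F).  So the edges at distance > d from F are exactly the edges of C
   avoiding F :|: N_C(F), which are also the minimal sets E :\: F of size at
   least 2.  A short chain between two such edges stays in their union, so
   C:F and C have the same distances up to d, and F can be added to any
   pairwise (d+1)-disjoint family of C:F. *)

From mathcomp Require Import all_boot.
From mathcomp Require Import boolp.
From mathcomp Require Import zify.

Set Implicit Arguments.
Unset Strict Implicit.
Unset Printing Implicit Defensive.

Section Distance.
Variables (V : finType) (D : {set {set V}}).
Implicit Types (A B : {set V}) (ps : seq (V * {set V})).

Lemma size_chain_seq A ps : size (chain_seq A ps) = (size ps).*2.+1.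
Proof. by rewrite /chain_seq /=; elim: ps => //= p ps [->]; rewrite doubleS. Qed.

Lemma chain_seq_inj A : injective (chain_seq A).
Proof.
move=> ps1 ps2 [].
by elim: ps1 ps2 => [|[x1 e1] ps1 IH] [|[x2 e2] ps2] //= [-> -> /IH ->].
Qed.

Lemma dist_chain A B k : dist D A B = Some k ->
  exists2 ps, proper_chain D A B ps & size ps = k.
Proof.
rewrite /dist; case: pselect => // h [<-].
by case: ex_minnP => m /asboolP [ps [pc _ <-]] _; exists ps.
Qed.

(* A redundant chain has a proper subchain, which is strictly shorter since
   [chain_seq] is injective; so some irredundant chain is at most as long. *)
Lemma dist_le_size A B ps : proper_chain D A B ps ->
  exists2 k, dist D A B = Some k & k <= size ps.
Proof.
have [n] := ubnP (size ps); elim: n ps => // n IH ps /ltnSE le_size pc.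
have [irr|/existsNP[ps' /not_implyP[sub /not_implyP[pc' neq]]]] :=
  pselect (irredundant D A B ps).
  have hk : has_chain_of_length D A B (size ps) by apply/asboolP; exists ps.
  rewrite /dist; case: pselect => [h|[]]; last by exists (size ps).
  by exists (ex_minn h) => //; case: ex_minnP => m _ /(_ _ hk).
have lt : size ps' < size ps.
  have [] := size_subseq_leqif sub; rewrite !size_chain_seq ltnS leq_double.
  rewrite leq_eqVlt => /orP[/eqP eq_size|//].
  by rewrite eq_size eqxx => /esym/eqP/chain_seq_inj.
have [k hk le_k] := IH _ (leq_trans lt le_size) pc'.
by exists k => //; apply: leq_trans le_k (ltnW lt).
Qed.

Lemma dist_geP A B t :
  dist_ge (dist D A B) t <-> (forall ps, proper_chain D A B ps -> t <= size ps).
Proof.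
split=> [h ps /dist_le_size [k hk le_k] | h].
  by move: h; rewrite hk => /leq_trans; apply.
by case e: (dist D A B) => [k|] //=; have [ps /h pc <-] := dist_chain e.
Qed.

End Distance.

Definition chain_step {V : finType} (A B : {set V}) := #|A :&: B| == #|B| - 1.

Section ProperChains.
Variable V : finType.
Implicit Types (D : {set {set V}}) (A B F : {set V}) (ps : seq (V * {set V})).

Lemma proper_chainP D A B ps : proper_chain D A B ps ->
  [/\ all (mem D) (A :: map snd ps), last A (map snd ps) = B &
      path chain_step A (map snd ps)].
Proof.
case/and5P=> _ allD /eqP -> _ /andP[_ steps]; split=> //.
elim: ps A steps {allD} => [|[x E] ps IH] A //= /andP[/and3P[_ _ st] /IH].
by rewrite /chain_step st.
Qed.

Lemma proper_chain_nil D A B : proper_chain D A B [::] -> A = B.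
Proof. by case/and5P=> _ _ /eqP. Qed.

Lemma proper_chain_vertices D A B ps : proper_chain D A B ps ->
  all (fun p : V * {set V} => p.1 \in p.2) ps.
Proof.
case/and5P=> _ _ _ _ /andP[_].
by elim: ps A => [|[x E] ps IH] A //= /andP[/and3P[_ -> _] /IH].
Qed.

Lemma proper_chain_sub D D' A B ps : proper_chain D A B ps ->
  all (mem D') (A :: map snd ps) -> proper_chain D' A B ps.
Proof. by case/and5P=> h1 _ h3 h4 h5 h; apply/and5P. Qed.

Lemma proper_chain_cons D F A B y ps :
  F \in D -> #|B| <= #|F| -> proper_chain D A B ps ->
  F \notin A :: map snd ps -> y \notin map fst ps -> y \in F -> y \in A ->
  chain_step F A -> proper_chain D F B ((y, A) :: ps).
Proof.
move=> FD le_B /and5P[_ + lastB uniqx /andP[+ +]] nF ny yF yA.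
rewrite /chain_edges /chain_step /= => allD uniqE steps st.
by apply/and5P; split; rewrite //= ?FD ?allD ?ny ?uniqx ?nF ?uniqE ?yF ?yA ?st.
Qed.
End ProperChains.

Lemma card_setI_leD (V : finType) (X Y B : {set V}) :
  #|Y :&: B| <= #|X :&: B| + #|Y :\: X|.
Proof.
apply: leq_trans (leq_card_setU _ _); apply: subset_leq_card.
by apply/subsetP => z; rewrite !inE; case: (z \in X) (z \in Y) (z \in B) => [] [] [].
Qed.

Section UniformChains.
Variables (V : finType) (d : nat) (C : {set {set V}}).
Hypothesis unif : uniform d C.
Implicit Types (A B E X : {set V}) (s : seq {set V}).

Lemma chain_step_card_setI A E B : A \in C -> E \in C -> chain_step A E ->
  #|E :&: B| <= #|A :&: B| + 1 /\ #|A :&: B| <= #|E :&: B| + 1.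
Proof.
move=> /unif cA /unif cE /eqP st.
have := cardsID E A; have := cardsID A E; rewrite [E :&: A]setIC st cA cE.
split.
- by apply: leq_trans (card_setI_leD A _ _) _; rewrite leq_add2l; lia.
- by apply: leq_trans (card_setI_leD E _ _) _; rewrite leq_add2l; lia.
Qed.

Lemma chain_card_setI X s B : all (mem C) (X :: s) -> path chain_step X s ->
  #|X :&: B| <= #|last X s :&: B| + size s /\
  #|last X s :&: B| <= #|X :&: B| + size s.
Proof.
elim: s X => [|Y s IH] X /=; first by rewrite addn0.
case/and3P=> XC YC sC /andP[st p].
have [] := chain_step_card_setI B XC YC st.
have [] := IH Y (introT andP (conj YC sC)) p.
lia.
Qed.

(* An edge E of a chain from A to B is at most i steps from A and at most
   size s - i steps from B, so it meets A :|: B in at least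
   2 d - size s - #|A :&: B| >= d = #|E| vertices. *)
Lemma short_chain_sub_setU A B s : all (mem C) (A :: s) ->
  path chain_step A s -> last A s = B -> size s + #|A :&: B| <= d ->
  forall E, E \in s -> E \subset A :|: B.
Proof.
move=> allC p lastB short E Es; case/splitPr: Es allC p lastB short => s1 s2.
rewrite -cat_cons all_cat cat_path last_cat /= => /andP[C1 /andP[EC C2]].
case/and3P=> p1 st p2 lastB short.
have C1E : all (mem C) (A :: rcons s1 E) by rewrite -rcons_cons all_rcons; apply/andP.
have p1E : path chain_step A (rcons s1 E) by rewrite rcons_path p1.
have [cEA _] := chain_card_setI A C1E p1E.
have EC2 : all (mem C) (E :: s2) by apply/andP.
have [_ cEB] := chain_card_setI B EC2 p2.
have BC : B \in C by rewrite -lastB; apply: (allP EC2); apply: mem_last.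
move: cEA cEB short; rewrite last_rcons lastB size_rcons size_cat /= !setIid.
rewrite (unif BC) (unif (allP C1E _ (mem_head _ _))) => cEA cEB short.
have cAB : #|E :&: A :&: (E :&: B)| <= #|A :&: B|.
  by apply: subset_leq_card; apply: setISS; apply: subsetIr.
apply/setIidPl/eqP; rewrite eqEcard subsetIl (unif EC) setIUr.
have := cardsUI (E :&: A) (E :&: B); lia.
Qed.

End UniformChains.

Section MaxDisjoint.
Variables (V : finType) (d : nat) (D : {set {set V}}).

Lemma leq_cnum (S : {set {set V}}) :
  S \subset D -> pairwise_tdisjoint D d.+1 S -> #|S| <= cnum d D.
Proof. by move=> SD pwS; apply: leq_bigmax_cond; rewrite SD. Qed.

Lemma cnum_witness : exists2 S : {set {set V}},
  (S \subset D) && pairwise_tdisjoint D d.+1 S & cnum d D = #|S|.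
Proof.
rewrite /cnum; have [|S SP ->] := @eq_bigmax_cond _
  [pred S : {set {set V}} | (S \subset D) && pairwise_tdisjoint D d.+1 S] (fun S => #|S|).
  apply/card_gt0P; exists set0.
  by rewrite inE sub0set; apply/forall_inP => G; rewrite inE.
by exists S.
Qed.

End MaxDisjoint.

Lemma fresh_in_set (T : finType) (X : {set T}) (s : seq T) x :
  x \in s -> x \notin X -> size s <= #|X| -> exists2 y, y \in X & y \notin s.
Proof.
move=> xs xX le_s; apply/exists_inP; apply: contraLR le_s.
rewrite negb_exists_in -ltnNge => /forall_inP /= inS.
have sub : X \subset [set z in s] :\ x.
  apply/subsetP => z zX; rewrite !inE (negPn (inS z zX)) andbT.
  by apply: contraNneq xX => <-.
apply: leq_ltn_trans (subset_leq_card sub) _.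
have : #|[set z in s]| <= size s by rewrite cardsE card_size.
by have := cardsD1 x [set z in s]; rewrite inE xs /=; lia.
Qed.

Section Colon.
Variables (V : finType) (d : nat) (C : {set {set V}}) (F : {set V}).
Hypotheses (hypC : hypergraph C) (unif : uniform d C).
Hypotheses (pconn : properly_connected d C) (FC : F \in C).
Implicit Types (E G H P : {set V}) (ps : seq (V * {set V})) (S : {set {set V}}).

Lemma uniform_gt1 : 1 < d.
Proof. by rewrite -(unif FC); apply: hypC.1. Qed.

Lemma F_neq0 : F != set0.
Proof. by apply: contraTneq uniform_gt1 => F0; rewrite -(unif FC) F0 cards0. Qed.

Lemma disjoint_F_neq E : [disjoint E & F] -> E != F.
Proof. by apply: contraTneq => ->; rewrite -setI_eq0 setIid F_neq0. Qed.

Lemma nbhP w : reflect (exists2 E, E \in C & E :\: F = [set w]) (w \in nbh C F).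
Proof.
apply: (iffP bigcupP) => [[E /andP[EC /cards1P[z Ez]]]|[E EC Ew]].
  by rewrite Ez inE => /eqP->; exists E.
by exists E; rewrite ?Ew ?set11 // EC cards1.
Qed.

Lemma nbh_notin w : w \in nbh C F -> w \notin F.
Proof. by case/nbhP=> E _ Ew; have /setDP[] : w \in E :\: F by rewrite Ew set11. Qed.

Lemma colon_famP D : reflect (exists2 E : {set V}, (E \in C) && (E != F) & D = E :\: F)
                             (D \in colon_fam C F).
Proof. by apply: (iffP imsetP) => -[E EP ->]; exists E; rewrite // inE in EP *. Qed.

Lemma nbh_colon_fam w : w \in nbh C F -> [set w] \in colon_fam C F.
Proof.
case/nbhP=> E EC Ew; apply/colon_famP; exists E => //; rewrite EC /=.
by apply/eqP=> EF; move: Ew; rewrite EF setDv => /setP/(_ w); rewrite !inE eqxx.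
Qed.

Lemma sub_colon_vsE E :
  (E \subset colon_vs C F) = [disjoint E & F] && [disjoint E & nbh C F].
Proof. by rewrite /colon_vs setCU subsetI -!disjoints_subset. Qed.

Lemma near_F_meets_nbh P E : P \in C -> #|F :&: P| = d - 1 ->
  #|F :&: E| < #|P :&: E| -> exists2 z, z \in E & z \in nbh C F.
Proof.
move=> PC cFP lt_PE.
have /subsetPn[z /setIP[zP zE] zF] : ~~ (P :&: E \subset F).
  apply: contraTN lt_PE => sub; rewrite -leqNgt subset_leq_card //.
  by rewrite subsetI sub subsetIr.
exists z => //; apply/bigcupP; exists P; last by rewrite inE zP zF.
have := cardsID F P; rewrite setIC cFP (unif PC) PC /=.
by have := uniform_gt1; lia.
Qed.

Lemma chain_from_F_meets_nbh E ps : proper_chain C F E ps -> ps != [::] ->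
  size ps + #|F :&: E| <= d -> exists2 z, z \in E & z \in nbh C F.
Proof.
case/proper_chainP; case: ps => [|[x E1] ps] //=.
case/and3P=> _ E1C psC lastE /andP[/eqP st p] _ short.
have allC : all (mem C) (E1 :: map snd ps) by apply/andP.
have EC : E \in C by rewrite -lastE; apply: (allP allC); apply: mem_last.
have [_] := chain_card_setI unif E allC p.
rewrite lastE setIid (unif E1C) (unif EC) in st * => cE.
apply: (near_F_meets_nbh E1C st); move: short cE; rewrite size_map; lia.
Qed.

Lemma chain_to_F_meets_nbh E ps : proper_chain C E F ps -> ps != [::] ->
  size ps + #|E :&: F| <= d -> exists2 z, z \in E & z \in nbh C F.
Proof.
case/proper_chainP; case/lastP: ps => [|ps [x P]] //.
rewrite map_rcons last_rcons -rcons_cons all_rcons rcons_path size_rcons.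
set Q := last E _ => /andP[_ allC] -> /andP[p /eqP st] _ short.
have QC : Q \in C by apply: (allP allC); apply: mem_last.
have [cE _] := chain_card_setI unif E allC p.
rewrite setIid (unif (allP allC _ (mem_head _ _))) -/Q in cE.
rewrite setIC (unif FC) in st.
apply: (near_F_meets_nbh QC st); move: short cE; rewrite setIC size_map; lia.
Qed.

Lemma edge_meeting_F_meets_nbh E : E \in C -> E != F -> F :&: E != set0 ->
  exists2 z, z \in E & z \in nbh C F.
Proof.
move=> EC EF FE0; have [ps pc size_ps] := dist_chain (pconn FC EC FE0).
apply: (chain_from_F_meets_nbh pc).
  by apply: contra_neq EF => ps0; move: pc; rewrite ps0 => /proper_chain_nil.
by rewrite size_ps subnK // -(unif FC) subset_leq_card ?subsetIl.
Qed.

Lemma sub_colon_vs_dist_from_F E : E \subset colon_vs C F ->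
  dist_ge (dist C F E) d.+1.
Proof.
rewrite sub_colon_vsE => /andP[dEF dEN]; apply/dist_geP => ps pc.
rewrite ltnNge; apply/negP => short.
have ps0 : ps != [::].
  apply: contra_neq (disjoint_F_neq dEF) => ps0.
  by move: pc; rewrite ps0 => /proper_chain_nil.
have short' : size ps + #|F :&: E| <= d.
  by rewrite setIC (disjoint_setI0 dEF) cards0 addn0.
have [z zE] := chain_from_F_meets_nbh pc ps0 short'.
by rewrite (disjointFr dEN zE).
Qed.

Lemma sub_colon_vs_dist_to_F E : E \subset colon_vs C F ->
  dist_ge (dist C E F) d.+1.
Proof.
rewrite sub_colon_vsE => /andP[dEF dEN]; apply/dist_geP => ps pc.
rewrite ltnNge; apply/negP => short.
have ps0 : ps != [::].
  apply: contra_neq (disjoint_F_neq dEF) => ps0.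
  by move: pc; rewrite ps0 => /proper_chain_nil.
have short' : size ps + #|E :&: F| <= d.
  by rewrite (disjoint_setI0 dEF) cards0 addn0.
have [z zE] := chain_to_F_meets_nbh pc ps0 short'.
by rewrite (disjointFr dEN zE).
Qed.

(* The chain starts with an edge E' = F - y + w and continues by a chain of
   length d - 1 from E' to E, which exists since E' :&: E = [set w]; the
   vertex y is picked in F :&: E' outside the d - 1 vertices of that chain,
   one of which lies in E. *)
Lemma chain_via_nbh E w : E \in C -> [disjoint E & F] -> w \in E ->
  w \in nbh C F -> exists2 ps, proper_chain C F E ps & size ps = d.
Proof.
move=> EC dEF wE /nbhP[E' E'C E'w].
have dFE : [disjoint F & E] by rewrite disjoint_sym.
have /setDP[wE' wF] : w \in E' :\: F by rewrite E'w set11.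
have cFE' : #|F :&: E'| = d - 1.
  by have := cardsID F E'; rewrite E'w cards1 (unif E'C) setIC => <-; rewrite addnK.
have E'E : E' :&: E = [set w].
  apply/setP => z; rewrite !inE; apply/andP/eqP => [[zE' zE]|->] //.
  by apply/set1P; rewrite -E'w inE zE' (disjointFr dEF zE).
have [ps pc size_ps] : exists2 ps, proper_chain C E' E ps & size ps = d - 1.
  apply: dist_chain; rewrite (pconn E'C EC) ?E'E ?cards1 //.
  by apply/set0Pn; exists w; rewrite set11.
have [allC lastE steps] := proper_chainP pc.
have F_E' : F != E' by apply: contraNneq wF => ->.
have F_ps : F \notin map snd ps.
  apply/negP => /(short_chain_sub_setU unif allC steps lastE) FE'E.
  have /FE'E : size (map snd ps) + #|E' :&: E| <= d.
    by rewrite size_map size_ps E'E cards1 subnK // ltnW // uniform_gt1.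
  move=> FE'E'; suff FE' : F \subset E' by rewrite (hypC.2 _ _ FC E'C FE') eqxx in F_E'.
  apply/subsetP => z zF; have := subsetP FE'E' z zF.
  by rewrite inE (disjointFr dFE zF) orbF.
have [x xs xE] : exists2 x, x \in map fst ps & x \in E.
  case: ps pc size_ps lastE {allC steps F_ps} => [|q ps] pc size_ps lastE.
    by move: size_ps uniform_gt1 => /=; lia.
  exists (last q ps).1; first by apply: map_f; apply: mem_last.
  rewrite -lastE /= (last_map (fun p : V * {set V} => p.2)).
  by apply: (allP (proper_chain_vertices pc)); apply: mem_last.
have [y /setIP[yF yE'] ys] : exists2 y, y \in F :&: E' & y \notin map fst ps.
  apply: (fresh_in_set xs); last by rewrite size_map size_ps cFE'.
  by rewrite inE (disjointFr dEF xE).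
exists ((y, E') :: ps); last by rewrite /= size_ps subn1 prednK // ltnW // uniform_gt1.
apply: proper_chain_cons yF yE' _ => //; first by rewrite (unif EC) (unif FC).
- by rewrite inE negb_or F_E'.
- by rewrite /chain_step cFE' (unif E'C).
Qed.

(* A vertex w of N_C(F) gives the member [set w] of colon_fam, so by
   minimality no edge of C:F, all of size >= 2, can contain it. *)
Lemma colon_sub_induced : colon C F \subset induced C (colon_vs C F).
Proof.
apply/subsetP => _ /setIdP[/colon_famP[E /andP[EC EF] ->] /andP[/forall_inP minE gt1]].
have no_nbh w : w \in nbh C F -> w \notin E :\: F.
  move=> wN; apply: contraL gt1 => wE.
  have /implyP/(_ _)/eqP <- := minE _ (nbh_colon_fam wN); last by rewrite sub1set.
  by rewrite cards1.
have dEF : [disjoint E & F].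
  rewrite -setI_eq0 setIC; apply: contraT => FE0.
  have [w wE wN] := edge_meeting_F_meets_nbh EC EF FE0.
  by move: (no_nbh w wN); rewrite inE wE (nbh_notin wN).
rewrite (setDidPl dEF) in no_nbh *; rewrite inE EC sub_colon_vsE dEF /=.
by apply/pred0P => w /=; apply/andP => -[wE /no_nbh]; rewrite wE.
Qed.

Lemma induced_sub_colon : induced C (colon_vs C F) \subset colon C F.
Proof.
apply/subsetP => E; rewrite inE sub_colon_vsE => /and3P[EC dEF dEN].
have colon_famE : E \in colon_fam C F.
  by apply/colon_famP; exists E; rewrite ?(setDidPl dEF) // EC disjoint_F_neq.
rewrite inE colon_famE (unif EC) uniform_gt1 andbT /=.
apply/forall_inP => _ /colon_famP[E2 /andP[E2C E2F] ->]; apply/implyP => sub.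
have [dE2F|] := boolP [disjoint E2 & F].
  by rewrite (setDidPl dE2F) in sub *; rewrite (hypC.2 _ _ E2C EC sub).
rewrite -setI_eq0 setIC => FE20.
have [w wE2 wN] := edge_meeting_F_meets_nbh E2C E2F FE20.
have wE : w \in E by apply: (subsetP sub); rewrite inE wE2 nbh_notin.
by rewrite (disjointFr dEN wE) in wN.
Qed.

Lemma colon_induced : colon C F = induced C (colon_vs C F).
Proof. by apply/eqP; rewrite eqEsubset colon_sub_induced induced_sub_colon. Qed.

Lemma colon_mem E : (E \in colon C F) = (E \in C) && (E \subset colon_vs C F).
Proof. by rewrite colon_induced inE. Qed.

Lemma colon_dist_ge E : E \in C ->
  (E \in colon C F) = dist_ge (dist C F E) d.+1.
Proof.
move=> EC; rewrite colon_mem EC /=.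
apply/idP/idP => [|dist_E]; first exact: sub_colon_vs_dist_from_F.
have [FE0|] := eqVneq (F :&: E) set0; last first.
  by move=> /(pconn FC EC); move: dist_E => /[swap] ->; rewrite /= ltnNge leq_subr.
have dEF : [disjoint E & F] by rewrite -setI_eq0 setIC FE0.
rewrite sub_colon_vsE dEF /=; apply/pred0P => w /=; apply/andP => -[wE wN].
have [ps pc size_ps] := chain_via_nbh EC dEF wE wN.
by move/dist_geP: dist_E => /(_ _ pc); rewrite size_ps ltnn.
Qed.

Lemma F_notin_colon : F \notin colon C F.
Proof.
by rewrite colon_dist_ge // (pconn FC FC) ?setIid ?(unif FC) ?subnn ?F_neq0.
Qed.

Lemma colon_sub : colon C F \subset C.
Proof. by apply/subsetP => E; rewrite colon_mem => /andP[]. Qed.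

(* A chain of C between two edges of C:F that is short enough stays inside
   their union, hence inside C:F. *)
Lemma colon_dist_ge_C G H : G \in colon C F -> H \in colon C F ->
  dist_ge (dist (colon C F) G H) d.+1 -> dist_ge (dist C G H) d.+1.
Proof.
rewrite !colon_mem => /andP[GC sG] /andP[HC sH] /dist_geP dist_GH.
apply/dist_geP => ps pc; rewrite ltnNge; apply/negP => le_ps.
have [ps' pc' short] :
    exists2 ps', proper_chain C G H ps' & size ps' + #|G :&: H| <= d.
  have [GH0|GH0] := eqVneq (G :&: H) set0.
    by exists ps; rewrite // GH0 cards0 addn0.
  have [ps' pc' size_ps'] := dist_chain (pconn GC HC GH0); exists ps' => //.
  by rewrite size_ps' subnK // -(unif GC) subset_leq_card ?subsetIl.
have [allC lastH steps] := proper_chainP pc'.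
have pc_colon : proper_chain (colon C F) G H ps'.
  apply: (proper_chain_sub pc'); apply/allP => E EGps.
  have EC : E \in C := allP allC _ EGps.
  rewrite /= colon_mem EC /=.
  case/predU1P: EGps => [-> // | Eps].
  apply: subset_trans (short_chain_sub_setU unif allC steps lastH _ Eps) _.
    by rewrite size_map.
  by rewrite subUset sG.
by move/(_ _ pc_colon): dist_GH; rewrite ltnNge (leq_trans (leq_addr _ _) short).
Qed.

Lemma pairwise_tdisjoint_colon S : S \subset colon C F ->
  pairwise_tdisjoint (colon C F) d.+1 S -> pairwise_tdisjoint C d.+1 (F |: S).
Proof.
move=> S_colon /forall_inP pwS.
apply/forall_inP => G /setU1P GS; apply/forall_inP => H /setU1P HS; apply/implyP => GH.
have colonS K : K \in S -> K \in colon C F := subsetP S_colon K.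
case: GS HS GH => [->|GS] [->|HS] GH.
- by rewrite eqxx in GH.
- by rewrite -colon_dist_ge ?(subsetP colon_sub) ?colonS.
- by apply: sub_colon_vs_dist_to_F; move: (colonS _ GS); rewrite colon_mem => /andP[].
- apply: colon_dist_ge_C; rewrite ?colonS //.
  by move/forall_inP: (pwS G GS) => /(_ H HS)/implyP; apply.
Qed.

Lemma cnum_colon : cnum d (colon C F) + 1 <= cnum d C.
Proof.
have [S /andP[S_colon pwS] ->] := cnum_witness d (colon C F).
have FS : F \notin S by apply: contra F_notin_colon; apply: (subsetP S_colon).
have FSC : F |: S \subset C.
  by rewrite subUset sub1set FC (subset_trans S_colon colon_sub).
have := leq_cnum FSC (pairwise_tdisjoint_colon S_colon pwS).
by rewrite cardsU1 FS addnC.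
Qed.

End Colon.

Theorem theorem4p1 (V : finType) (d : nat) (C : {set {set V}}) (F : {set V}) :
  hypergraph C -> uniform d C -> properly_connected d C -> F \in C ->
  [/\ (forall E, E \in C -> (E \in colon C F <-> dist_ge (dist C F E) d.+1)),
      colon C F = induced C (colon_vs C F),
      colon C F = [set G in C | dist_ge (dist C F G) d.+1] &
      cnum d (colon C F) + 1 <= cnum d C].
Proof.
move=> hypC unif pconn FC.
have colon_distE := colon_dist_ge hypC unif pconn FC.
split; first by move=> E /colon_distE ->.
- exact: (colon_induced hypC unif pconn FC).
- apply/setP => G; rewrite [in RHS]inE.
  case GC: (G \in C) => /=; first exact: colon_distE.
  by rewrite (colon_mem hypC unif pconn FC) GC.
- exact: (cnum_colon hypC unif pconn FC).
Qed.
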